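(* Let $A$ be a bialgebra over a commutative ring $\Bbbk$ with product $\mu$, unit $1_A$, coproduct $\Delta a=a^{(1)}\otimes a^{(2)}$ and counit $\varepsilon$. Let $\mathcal{O}^A$ be the operad with multiplication with $\mathcal{O}^A(n)=\mathrm{Hom}_\Bbbk(A^{\otimes n},\Bbbk)$, partial compositions, for $f\in\mathcal{O}^A(m)$, $g\in\mathcal{O}^A(n)$, $$(f\circ_i g)(a_1\otimes\dots\otimes a_{m+n-1})=f\big(a_1\otimes\dots\otimes a_{i-1}\otimes a_i^{(1)}\cdots a_{i+n-1}^{(1)}\,g(a_i^{(2)}\otimes\dots\otimes a_{i+n-1}^{(2)})\otimes a_{i+n}\otimes\dots\otimes a_{m+n-1}\big),$$ identity $\varepsilon$, multiplication $\varepsilon\circ\mu$ and $e=\mathrm{id}_\Bbbk$; its cochain complex is the dual $(BA)^\vee$ of the bar construction, with cohomology $\mathrm{Ext}^*_A(\Bbbk,\Bbbk)$, which thus carries a Gerstenhaber algebra structure. Let $\mathcal{E}nd(A)$ be the operad with multiplication $\mathcal{E}nd(A)(n)=\mathrm{Hom}_\Bbbk(A^{\otimes n},A)$, $\gamma(f;g_1,\dots,g_n)=f\circ(g_1\otimes\dots\otimes g_n)$, identity $\mathrm{id}_A$, multiplication $\mu$, $e$ the unit $\Bbbk\to A$; its cochain complex is the Hochschild cochain complex $\mathcal{C}^*(A,A)$, so $HH^*(A,A)$ is a Gerstenhaber algebra. Then the maps $lift:\mathrm{Hom}(A^{\otimes n},\Bbbk)\to\mathrm{Hom}(A^{\otimes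 n},A)$, $lift(f)(a_1\otimes\dots\otimes a_n)=a_1^{(1)}\cdots a_n^{(1)}f(a_1^{(2)}\otimes\dots\otimes a_n^{(2)})$, induce an injective morphism of Gerstenhaber algebras $\mathrm{Ext}^*_A(\Bbbk,\Bbbk)\hookrightarrow HH^*(A,A)$; i.e. $\mathrm{Ext}^*_A(\Bbbk,\Bbbk)$ is a sub Gerstenhaber algebra of $HH^*(A,A)$.
   Context: A (non-symmetric, $\Bbbk$-linear) operad $O$ consists of $\Bbbk$-modules $O(n)$, $n\ge0$, an identity $id\in O(1)$ and associative unital partial compositions $\circ_i:O(m)\otimes O(n)\to O(m+n-1)$. An operad with multiplication has $\mu\in O(2)$, $e\in O(0)$ with $\mu\circ_1\mu=\mu\circ_2\mu$, $\mu\circ_1e=id=\mu\circ_2e$. Its cochain complex $\mathcal{C}^*(O)$: $O(n)$ in degree $n$, $df=\mu\circ_2f+\sum_{i=1}^n(-1)^if\circ_i\mu+(-1)^{n+1}\mu\circ_1f$. Cup product $f\cup g=(\mu\circ_1f)\circ_{m+1}g$ and bracket $\{f,g\}=f\bar\circ g-(-1)^{(m-1)(n-1)}g\bar\circ f$, $f\bar\circ g=(-1)^{(m-1)(n-1)}\sum_{i=1}^m(-1)^{(n-1)(i-1)}f\circ_ig$, make $H(\mathcal{C}^*(O))$ a Gerstenhaber algebra; morphisms of operads with multiplication induce morphisms of Gerstenhaber algebras. *)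

From HB Require Import structures.
From mathcomp Require Import all_boot all_order all_algebra.
Set Implicit Arguments. Unset Strict Implicit. Unset Printing Implicit Defensive.
Import Order.TTheory GRing.Theory.
Local Open Scope ring_scope.

(* An element of O(n) is represented by a function on lists (of length n)   *)
(* of "inputs"; only its values on lists of length n matter.                *)

Record opmul (T : Type) (M : zmodType) := OpMul {
  (* ocomp m n i f g = f o_i g, for f of arity m, g of arity n, 1 <= i <= m *)
  ocomp : nat -> nat -> nat -> (seq T -> M) -> (seq T -> M) -> (seq T -> M);
  oid : seq T -> M;   (* identity, arity 1 *)
  omu : seq T -> M;   (* multiplication, arity 2 *)
  oe  : seq T -> M    (* e, arity 0 *)
}.

Section Cochains.
Variables (T : Type) (M : zmodType) (O : opmul T M).

Definition sgn (k : nat) (x : M) : M := if odd k then - x else x.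

Definition fadd (f g : seq T -> M) : seq T -> M := fun s => f s + g s.
Definition fsub (f g : seq T -> M) : seq T -> M := fun s => f s - g s.
Definition fzero : seq T -> M := fun _ => 0.

Definition odiff (n : nat) (f : seq T -> M) : seq T -> M := fun s =>
  ocomp O 2 n 2 (omu O) f s
  + \sum_(1 <= i < n.+1) sgn i (ocomp O n 2 i f (omu O) s)
  + sgn n.+1 (ocomp O 2 n 1 (omu O) f s).

Definition ocup (m n : nat) (f g : seq T -> M) : seq T -> M :=
  ocomp O m.+1 n m.+1 (ocomp O 2 m 1 (omu O) f) g.

(* f bar-o g = (-1)^((m-1)(n-1)) sum_{i=1}^m (-1)^((n-1)(i-1)) f o_i g.
   Signs are taken with integer exponents: (m-1)(n-1) has the parity of
   (m+1)(n+1), and (n-1)(i-1) that of (n+1)(i+1). *)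
Definition obarcomp (m n : nat) (f g : seq T -> M) : seq T -> M := fun s =>
  sgn (m.+1 * n.+1)
    (\sum_(1 <= i < m.+1) sgn (n.+1 * i.+1) (ocomp O m n i f g s)).

Definition obracket (m n : nat) (f g : seq T -> M) : seq T -> M := fun s =>
  obarcomp m n f g s - sgn (m.+1 * n.+1) (obarcomp n m g f s).

Definition eqdeg (n : nat) (f g : seq T -> M) : Prop :=
  forall s : seq T, size s = n -> f s = g s.

End Cochains.

(* Hom_R(A^{(x)n}, M) is represented (universal property of the tensor      *)
(* power) by the R-multilinear maps of n arguments, i.e. functions on lists *)
(* of length n which are linear in each argument.                            *)
(* The coproduct is given in Sweedler form: Delta a = sum_{p in cop a}       *)
(* p.1 (x) p.2.  Identities in A^{(x)k} are expressed through the universal  *)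
(* property: after applying an arbitrary k-linear map into an arbitrary     *)
(* R-module.                                                                 *)

Section Bialgebra.
Variables (R : comPzRingType) (A : algType R).

Definition multilin (M : lmodType R) (n : nat) (f : seq A -> M) : Prop :=
  forall (s t : seq A) (x : R) (a b : A), (size s + size t).+1 = n ->
    f (s ++ (x *: a + b) :: t) = x *: f (s ++ a :: t) + f (s ++ b :: t).

Definition bilin (M : lmodType R) (phi : A -> A -> M) : Prop :=
  multilin 2 (fun s => phi (nth 0 s 0) (nth 0 s 1)).

Definition trilin (M : lmodType R) (psi : A -> A -> A -> M) : Prop :=
  multilin 3 (fun s => psi (nth 0 s 0) (nth 0 s 1) (nth 0 s 2)).

Definition swe (cop : A -> seq (A * A)) (M : lmodType R) (phi : A -> A -> M)
  (a : A) : M := \sum_(p <- cop a) phi p.1 p.2.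

Definition is_bialgebra (cop : A -> seq (A * A)) (eps : A -> R) : Prop :=
      (forall (x : R) (a b : A), eps (x *: a + b) = x * eps a + eps b) /\
      (forall a b : A, eps (a * b) = eps a * eps b) /\
      eps 1 = 1 /\
      (forall (M : lmodType R) (phi : A -> A -> M), bilin phi ->
         forall (x : R) (a b : A),
           swe cop phi (x *: a + b) = x *: swe cop phi a + swe cop phi b) /\
      (forall (M : lmodType R) (psi : A -> A -> A -> M), trilin psi ->
         forall a : A,
           \sum_(p <- cop a) \sum_(q <- cop p.1) psi q.1 q.2 p.2
           = \sum_(p <- cop a) \sum_(q <- cop p.2) psi p.1 q.1 q.2) /\
      (forall a : A, \sum_(p <- cop a) eps p.1 *: p.2 = a) /\
      (forall a : A, \sum_(p <- cop a) eps p.2 *: p.1 = a) /\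
      (forall (M : lmodType R) (phi : A -> A -> M), bilin phi ->
         (forall a b : A, swe cop phi (a * b)
            = \sum_(p <- cop a) \sum_(q <- cop b) phi (p.1 * q.1) (p.2 * q.2))
         /\ swe cop phi 1 = phi 1 1).

Variables (cop : A -> seq (A * A)) (eps : A -> R).

(* Sweedler expansion of Delta^{(x)k}(a_1 (x) ... (x) a_k) *)
Fixpoint combos (s : seq A) : seq (seq (A * A)) :=
  match s with
  | [::] => [:: [::]]
  | a :: s' => [seq p :: ps | p <- cop a, ps <- combos s']
  end.

Definition firsts_prod (ps : seq (A * A)) : A := \prod_(p <- ps) p.1.

Definition OA_comp (m n i : nat) (f g : seq A -> R^o) : seq A -> R^o :=
  fun s =>
    let pre := take i.-1 s in
    let mid := take n (drop i.-1 s) in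
    let post := drop (i.-1 + n) s in
    \sum_(ps <- combos mid)
       f (pre ++ (g (map snd ps) *: firsts_prod ps) :: post).

Definition OA : opmul A R^o :=
  @OpMul A R^o OA_comp
    (fun s => eps (nth 0 s 0))
    (fun s => eps (nth 0 s 0 * nth 0 s 1))
    (fun _ => 1).

Definition End_comp (m n i : nat) (f g : seq A -> A) : seq A -> A :=
  fun s => f (take i.-1 s ++ g (take n (drop i.-1 s)) :: drop (i.-1 + n) s).

Definition EndA : opmul A A :=
  @OpMul A A End_comp
    (fun s => nth 0 s 0)
    (fun s => nth 0 s 0 * nth 0 s 1)
    (fun _ => 1).

Definition bilift (f : seq A -> R^o) : seq A -> A :=
  fun s => \sum_(ps <- combos s) f (map snd ps) *: firsts_prod ps.

End Bialgebra.

Definition cocycle (R : comPzRingType) (A : algType R) (M : lmodType R)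
  (O : opmul A M) (n : nat) (f : seq A -> M) : Prop :=
  multilin n f /\ eqdeg n.+1 (odiff O n f) (@fzero A M).

Definition coboundary (R : comPzRingType) (A : algType R) (M : lmodType R)
  (O : opmul A M) (n : nat) (f : seq A -> M) : Prop :=
  match n with
  | 0 => eqdeg 0 f (@fzero A M)
  | n'.+1 => exists h : seq A -> M, multilin n' h /\ eqdeg n f (odiff O n' h)
  end.

From HB Require Import structures.
From mathcomp Require Import all_boot all_order all_algebra.
From mathcomp Require Import zify.
Set Implicit Arguments. Unset Strict Implicit. Unset Printing Implicit Defensive.
Import GRing.Theory.
Local Open Scope ring_scope.

(* The lift is a morphism of operads with multiplication from O^A to End(A).
   Counitality gives lift (eps o mu) = mu and lift (id_k) = 1; coassociativity
   and multiplicativity of Delta give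
     Delta (lift g (a_1 .. a_n)) = a_1^(1) .. a_n^(1) (x) lift g (a_1^(2) .. a_n^(2)),
   which turns lift (f o_i g) into lift f o_i lift g.  Hence lift commutes on
   the nose with the differential, the cup product and the bracket.  For
   injectivity in cohomology, eps o lift is the identity, and since eps is
   multiplicative, eps o - carries Hochschild coboundaries to coboundaries of
   O^A; so a cocycle whose lift is a coboundary is itself a coboundary. *)

(** * Linear and multilinear maps *)

Section LinearMaps.
Variables (R : comPzRingType) (U M : lmodType R) (F : U -> M).
Hypothesis linF : linear F.

Let LF : {linear U -> M} := HB.pack F (GRing.isLinear.Build R U M *:%R F linF).

Lemma lin0 : F 0 = 0. Proof. exact: (linear0 LF). Qed.
Lemma linD a b : F (a + b) = F a + F b. Proof. exact: (linearD LF). Qed.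
Lemma linN a : F (- a) = - F a. Proof. exact: (linearN LF). Qed.
Lemma linZ x a : F (x *: a) = x *: F a. Proof. exact: (linearZ_LR LF). Qed.
Lemma linear_scale c : linear (fun a => c *: F a).
Proof. by move=> x a b; rewrite linF scalerDr !scalerA mulrC. Qed.

Lemma lin_sum (I : Type) (r : seq I) (G : I -> U) :
  F (\sum_(i <- r) G i) = \sum_(i <- r) F (G i).
Proof. exact: (linear_sum LF). Qed.

End LinearMaps.

Section Multilinear.
Variables (R : comPzRingType) (A : algType R) (M : lmodType R).

Lemma multilin_linear n (f : seq A -> M) s t :
  multilin n f -> (size s + size t).+1 = n -> linear (fun a => f (s ++ a :: t)).
Proof. by move=> Hf Hn x a b; apply: Hf. Qed.

Lemma multilin_cons n (f : seq A -> M) a :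
  multilin n.+1 f -> multilin n (fun s => f (a :: s)).
Proof. by move=> Hf s t x b c Hn; apply: (Hf (a :: s)); rewrite /= -Hn. Qed.

Lemma multilin_comp (N : lmodType R) n (F : M -> N) (f : seq A -> M) :
  linear F -> multilin n f -> multilin n (fun s => F (f s)).
Proof. by move=> HF Hf s t x a b Hn; rewrite Hf // HF. Qed.

Lemma bilinP (phi : A -> A -> M) :
  (forall v, linear (phi ^~ v)) -> (forall u, linear (phi u)) -> bilin phi.
Proof.
move=> H1 H2 [|u [|? ?]] [|v [|? ?]] //= x a b _; by rewrite ?H1 ?H2.
Qed.

Lemma bilin_linl (phi : A -> A -> M) v : bilin phi -> linear (phi ^~ v).
Proof. by move=> Hphi x a b; apply: (Hphi [::] [:: v]). Qed.

Lemma bilin_linr (phi : A -> A -> M) u : bilin phi -> linear (phi u).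
Proof. by move=> Hphi x a b; apply: (Hphi [:: u] [::]). Qed.

Lemma trilinP (psi : A -> A -> A -> M) :
  (forall v w, linear (fun u => psi u v w)) ->
  (forall u w, linear (fun v => psi u v w)) ->
  (forall u v, linear (psi u v)) -> trilin psi.
Proof.
move=> H1 H2 H3 [|u [|v [|? ?]]] [|v' [|w [|? ?]]] //= x a b _;
  by rewrite ?H1 ?H2 ?H3.
Qed.

End Multilinear.

Lemma multilin_prod (R : comPzRingType) (A : algType R) n :
  multilin n (fun s : seq A => \prod_(a <- s) a).
Proof.
by move=> s t x a b _; rewrite !big_cat !big_cons /= mulrDl mulrDr -scalerAl -scalerAr.
Qed.

(** * Partial composition in the endomorphism operad *)

(* [ocomp (EndA A)] with the outer map allowed to take values in any type. *)
Definition plug (T M : Type) (i n : nat) (f : seq T -> M) (g : seq T -> T)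
  (s : seq T) : M :=
  f (take i.-1 s ++ g (take n (drop i.-1 s)) :: drop (i.-1 + n) s).

Lemma plugE (T M : Type) i n (f : seq T -> M) g pre mid post :
  size pre = i.-1 -> size mid = n ->
  plug i n f g (pre ++ mid ++ post) = f (pre ++ g mid :: post).
Proof.
rewrite /plug => <- <-; rewrite take_size_cat // drop_size_cat // take_size_cat //.
by rewrite catA drop_size_cat // size_cat.
Qed.

Lemma size_plug_context (T : Type) m n i (s : seq T) :
  (0 < i <= m)%N -> (size s).+1 = (m + n)%N ->
  (size (take i.-1 s) + size (drop (i.-1 + n) s)).+1 = m.
Proof. by move=> /andP[? ?] Hs; rewrite size_take_min size_drop; lia. Qed.

Lemma plug_eqdeg (T M : zmodType) m n i (f f' : seq T -> M) (g g' : seq T -> T) s :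
  eqdeg m f f' -> eqdeg n g g' -> (0 < i <= m)%N -> (size s).+1 = (m + n)%N ->
  plug i n f g s = plug i n f' g' s.
Proof.
move=> Ef Eg /andP[i_gt0 i_le_m] Hs; rewrite /plug Eg ?size_takel ?size_drop; try lia.
by rewrite Ef // size_cat /= size_takel ?size_drop; lia.
Qed.

Lemma split_seq (T : Type) k (s : seq T) :
  (k <= size s)%N -> exists u v, size u = k /\ s = u ++ v.
Proof. by exists (take k s), (drop k s); rewrite cat_take_drop size_takel. Qed.

Lemma plug_multilin (R : comPzRingType) (A : algType R) (M : lmodType R)
    m n i (f : seq A -> M) (g : seq A -> A) :
  multilin m f -> multilin n g -> (0 < i <= m)%N ->
  multilin (m + n).-1 (plug i n f g).
Proof.
move=> Hf Hg /andP[i_gt0 i_le_m] s1 t1 x a b Hs.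
have [lt_s1_i | le_i_s1] := ltnP (size s1) i.-1.
  have [u [v [Hu Et1]]] := @split_seq _ (i.-1 - (size s1).+1) t1 ltac:(lia).
  subst t1; rewrite size_cat in Hs.
  have Es c : s1 ++ c :: u ++ v = (s1 ++ c :: u) ++ take n v ++ drop n v.
    by rewrite cat_take_drop -catA.
  rewrite !Es !plugE ?size_cat /= ?size_takel; try lia.
  by rewrite -!catA /=; apply: Hf; rewrite /= size_cat /= size_drop; lia.
have [p [m1 [Hp Es1]]] := split_seq le_i_s1.
subst s1; rewrite size_cat in Hs.
have [lt_s1_in | le_in_s1] := ltnP (size p + size m1) (i.-1 + n).
  have [m2 [q [Hm2 Et1]]] :=
    @split_seq _ (i.-1 + n - (size p + size m1).+1) t1 ltac:(lia).
  subst t1; rewrite size_cat in Hs.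
  have Es c : (p ++ m1) ++ c :: m2 ++ q = p ++ (m1 ++ c :: m2) ++ q.
    by rewrite -!catA.
  rewrite !Es !plugE ?size_cat /=; try lia.
  by rewrite Hg; [apply: Hf | ]; lia.
have [w [q [Hw Em1]]] := @split_seq _ n m1 ltac:(lia).
subst m1; rewrite size_cat in Hs.
have Es c : (p ++ w ++ q) ++ c :: t1 = p ++ w ++ (q ++ c :: t1) by rewrite -!catA.
rewrite !Es !plugE //.
by rewrite -!cat_cons !catA; apply: Hf; rewrite !size_cat /=; lia.
Qed.

(** * Sweedler sums over tensor powers *)

Section Bialgebra.
Variables (R : comPzRingType) (A : algType R) (cop : A -> seq (A * A)) (eps : A -> R).

Lemma size_combos ps s : ps \in combos cop s -> size ps = size s.
Proof.
elim: s ps => [|a s IH] ps /=; first by rewrite inE => /eqP ->.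
by case/allpairsPdep=> p [qs [_ /IH <- ->]].
Qed.

Lemma big_combos_nil (M : zmodType) (F : seq (A * A) -> M) :
  \sum_(ps <- combos cop [::]) F ps = F [::].
Proof. by rewrite big_seq1. Qed.

Lemma big_combos_cons (M : zmodType) (F : seq (A * A) -> M) a s :
  \sum_(ps <- combos cop (a :: s)) F ps
  = \sum_(p <- cop a) \sum_(ps <- combos cop s) F (p :: ps).
Proof. exact: big_allpairs_dep. Qed.

Lemma big_combos_cat (M : zmodType) (F : seq (A * A) -> M) s t :
  \sum_(ps <- combos cop (s ++ t)) F ps
  = \sum_(p1 <- combos cop s) \sum_(p2 <- combos cop t) F (p1 ++ p2).
Proof.
elim: s F => [|a s IH] F /=; first by rewrite big_combos_nil.
by rewrite !big_combos_cons; apply: eq_bigr => p _; rewrite IH.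
Qed.

Lemma eq_big_combos (M : zmodType) (F G : seq (A * A) -> M) s :
  (forall ps, size ps = size s -> F ps = G ps) ->
  \sum_(ps <- combos cop s) F ps = \sum_(ps <- combos cop s) G ps.
Proof. by move=> FG; apply: eq_big_seq => ps /size_combos /FG. Qed.

Lemma linear_big_combos (M : lmodType R) (F : seq (A * A) -> A -> M) s :
  (forall ps, size ps = size s -> linear (F ps)) ->
  linear (fun a => \sum_(ps <- combos cop s) F ps a).
Proof.
move=> HF x a b; rewrite scaler_sumr -big_split.
by apply: eq_big_combos => ps /HF; apply.
Qed.

Lemma firsts_prodE (ps : seq (A * A)) : firsts_prod ps = \prod_(a <- map fst ps) a.
Proof. by rewrite big_map. Qed.

Lemma firsts_prod_cat (ps qs : seq (A * A)) :
  firsts_prod (ps ++ qs) = firsts_prod ps * firsts_prod qs.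
Proof. exact: big_cat. Qed.

Lemma firsts_prod_cons (p : A * A) ps : firsts_prod (p :: ps) = p.1 * firsts_prod ps.
Proof. exact: big_cons. Qed.

Hypothesis Hbi : is_bialgebra cop eps.

Lemma eps_linear : linear (eps : A -> R^o).
Proof. by case: Hbi. Qed.
Lemma epsM a b : eps (a * b) = eps a * eps b.
Proof. by case: Hbi => _ []. Qed.
Lemma eps1 : eps 1 = 1.
Proof. by case: Hbi => _ [] _ []. Qed.
Lemma swe_linear (M : lmodType R) (phi : A -> A -> M) : bilin phi -> linear (swe cop phi).
Proof. by case: Hbi => _ [] _ [] _ [] H _ Hphi; apply: H. Qed.
Lemma coassoc (M : lmodType R) (psi : A -> A -> A -> M) a : trilin psi ->
  \sum_(p <- cop a) \sum_(q <- cop p.1) psi q.1 q.2 p.2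
  = \sum_(p <- cop a) \sum_(q <- cop p.2) psi p.1 q.1 q.2.
Proof. by case: Hbi => _ [] _ [] _ [] _ [] H _ Hpsi; apply: H. Qed.
Lemma counitl a : \sum_(p <- cop a) eps p.1 *: p.2 = a.
Proof. by case: Hbi => _ [] _ [] _ [] _ [] _ []. Qed.
Lemma counitr a : \sum_(p <- cop a) eps p.2 *: p.1 = a.
Proof. by case: Hbi => _ [] _ [] _ [] _ [] _ [] _ []. Qed.
Lemma sweM (M : lmodType R) (phi : A -> A -> M) a b : bilin phi ->
  swe cop phi (a * b)
  = \sum_(p <- cop a) \sum_(q <- cop b) phi (p.1 * q.1) (p.2 * q.2).
Proof. by case: Hbi => _ [] _ [] _ [] _ [] _ [] _ [] _ H Hphi; case: (H _ _ Hphi). Qed.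
Lemma swe1 (M : lmodType R) (phi : A -> A -> M) : bilin phi -> swe cop phi 1 = phi 1 1.
Proof. by case: Hbi => _ [] _ [] _ [] _ [] _ [] _ [] _ H Hphi; case: (H _ _ Hphi). Qed.

Lemma swe_prod (M : lmodType R) (phi : A -> A -> M) l : bilin phi ->
  swe cop phi (\prod_(a <- l) a)
  = \sum_(ps <- combos cop l) phi (firsts_prod ps) (\prod_(p <- ps) p.2).
Proof.
elim: l phi => [|a l IH] phi Hphi.
  by rewrite big_nil swe1 // big_combos_nil /firsts_prod !big_nil.
rewrite big_cons sweM // big_combos_cons; apply: eq_bigr => p _.
have Hphi_p : bilin (fun u v => phi (p.1 * u) (p.2 * v)).
  apply: bilinP => [v|u] x b c; rewrite mulrDr -scalerAr.
    exact: (bilin_linl _ Hphi).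
  exact: (bilin_linr _ Hphi).
have := IH _ Hphi_p; rewrite /swe => ->.
by apply: eq_bigr => ps _; rewrite firsts_prod_cons big_cons.
Qed.

Definition multilin3 (M : lmodType R) (k : nat)
    (psi : seq A -> seq A -> seq A -> M) :=
  [/\ forall Y Z, size Y = k -> size Z = k -> multilin k (fun X => psi X Y Z),
      forall X Z, size X = k -> size Z = k -> multilin k (fun Y => psi X Y Z) &
      forall X Y, size X = k -> size Y = k -> multilin k (psi X Y)].

Lemma coassoc_big_combos (M : lmodType R) (psi : seq A -> seq A -> seq A -> M) l :
  multilin3 (size l) psi ->
  \sum_(p <- combos cop l) \sum_(q <- combos cop (map fst p))
      psi (map fst q) (map snd q) (map snd p)
  = \sum_(p <- combos cop l) \sum_(q <- combos cop (map snd p))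
      psi (map fst p) (map fst q) (map snd q).
Proof.
elim: l psi => [|a l IH] psi [H1 H2 H3]; first by rewrite /= !big_seq1.
pose Phi x y z := \sum_(ps <- combos cop l) \sum_(qs <- combos cop (map snd ps))
  psi (x :: map fst ps) (y :: map fst qs) (z :: map snd qs).
have IHxyz x y z : \sum_(ps <- combos cop l) \sum_(qs <- combos cop (map fst ps))
    psi (x :: map fst qs) (y :: map snd qs) (z :: map snd ps) = Phi x y z.
  apply: (IH (fun X Y Z => psi (x :: X) (y :: Y) (z :: Z))).
  split=> [Y Z HY HZ | X Z HX HZ | X Y HX HY].
  - exact: (multilin_cons x (H1 (y :: Y) (z :: Z) (congr1 S HY) (congr1 S HZ))).
  - exact: (multilin_cons y (H2 (x :: X) (z :: Z) (congr1 S HX) (congr1 S HZ))).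
  - exact: (multilin_cons z (H3 (x :: X) (y :: Y) (congr1 S HX) (congr1 S HY))).
have Hsize ps qs : size ps = size l -> size qs = size (map snd ps) -> size qs = size l.
  by move=> Hps ->; rewrite size_map.
have Phi_trilin : trilin Phi.
  apply: trilinP => [v w|u w|u v]; apply: linear_big_combos => ps Hps;
    apply: linear_big_combos => qs /Hsize-/(_ Hps) Hqs.
  - by apply: (multilin_linear (f := fun X => psi X _ _) (s := [::]) (H1 _ _ _ _));
      rewrite /= ?size_map ?Hps ?Hqs.
  - by apply: (multilin_linear (f := fun Y => psi _ Y _) (s := [::]) (H2 _ _ _ _));
      rewrite /= ?size_map ?Hps ?Hqs.
  - by apply: (multilin_linear (f := psi _ _) (s := [::]) (H3 _ _ _ _));
      rewrite /= ?size_map ?Hps ?Hqs.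
transitivity (\sum_(p <- cop a) \sum_(q <- cop p.1) Phi q.1 q.2 p.2).
  rewrite big_combos_cons; apply: eq_bigr => p _.
  rewrite -(eq_bigr _ (fun q _ => IHxyz q.1 q.2 p.2)) exchange_big /=.
  by apply: eq_bigr => ps _; rewrite big_combos_cons.
rewrite coassoc // big_combos_cons; apply: eq_bigr => p _.
by rewrite /Phi exchange_big /=; apply: eq_bigr => ps _; rewrite big_combos_cons.
Qed.

Lemma counit_big_combos (M : lmodType R) s (F : seq A -> M) :
  multilin (size s) F ->
  \sum_(ps <- combos cop s) eps (firsts_prod ps) *: F (map snd ps) = F s.
Proof.
elim: s F => [|a s IH] F HF.
  by rewrite big_combos_nil /firsts_prod big_nil eps1 scale1r.
rewrite big_combos_cons.
transitivity (\sum_(p <- cop a) eps p.1 *: F (p.2 :: s)).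
  apply: eq_bigr => p _; rewrite -(IH _ (multilin_cons p.2 HF)) scaler_sumr.
  by apply: eq_bigr => ps _; rewrite firsts_prod_cons epsM scalerA.
have HF0 := multilin_linear (s := [::]) (t := s) HF (erefl _).
rewrite -{2}(counitl a) (lin_sum HF0).
by apply: eq_bigr => p _; rewrite (linZ HF0).
Qed.

Lemma linear_big_combos_at (M : lmodType R) s t (Psi : seq (A * A) -> M) :
  (forall p1 p3, size p1 = size s -> size p3 = size t ->
     bilin (fun u v => Psi (p1 ++ (u, v) :: p3))) ->
  linear (fun a => \sum_(ps <- combos cop (s ++ a :: t)) Psi ps).
Proof.
move=> HPsi.
pose phi p1 u v := \sum_(p3 <- combos cop t) Psi (p1 ++ (u, v) :: p3).
have E a : \sum_(ps <- combos cop (s ++ a :: t)) Psi ps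
    = \sum_(p1 <- combos cop s) swe cop (phi p1) a.
  rewrite big_combos_cat; apply: eq_bigr => p1 _.
  by rewrite big_combos_cons; apply: eq_bigr => -[u v] _.
suff Hlin : linear (fun a => \sum_(p1 <- combos cop s) swe cop (phi p1) a).
  by move=> x a b; rewrite !E Hlin.
apply: linear_big_combos => p1 Hp1; apply/swe_linear/bilinP => [v|u];
  apply: linear_big_combos => p3 Hp3.
  exact: bilin_linl (HPsi _ _ Hp1 Hp3).
exact: bilin_linr (HPsi _ _ Hp1 Hp3).
Qed.
(** * The lift map *)

Local Notation lift := (bilift cop).
Local Notation OA := (OA cop eps).
Local Notation EndA := (EndA A).

Lemma lift_eqdeg (f g : seq A -> R^o) s : eqdeg (size s) f g -> lift f s = lift g s.
Proof. by move=> Efg; apply: eq_big_combos => ps Hps; rewrite Efg ?size_map. Qed.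

Lemma liftP (f g : seq A -> R^o) x s :
  lift (fun t => x *: f t + g t) s = x *: lift f s + lift g s.
Proof.
by rewrite /bilift scaler_sumr -big_split; apply: eq_bigr => ps _; rewrite scalerDl scalerA.
Qed.

Lemma liftD (f g : seq A -> R^o) s : lift (fun t => f t + g t) s = lift f s + lift g s.
Proof. by rewrite -big_split; apply: eq_bigr => ps _; rewrite scalerDl. Qed.

Lemma liftN (f : seq A -> R^o) s : lift (fun t => - f t) s = - lift f s.
Proof. by rewrite /bilift -sumrN; apply: eq_bigr => ps _; rewrite scaleNr. Qed.

Lemma liftB (f g : seq A -> R^o) s : lift (fun t => f t - g t) s = lift f s - lift g s.
Proof. by rewrite liftD liftN. Qed.

Lemma lift_sgn k (f : seq A -> R^o) s : lift (fun t => sgn k (f t)) s = sgn k (lift f s).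
Proof. by rewrite /sgn; case: (odd k); rewrite ?liftN. Qed.

Lemma lift_sum lo hi (F : nat -> seq A -> R^o) s :
  lift (fun t => \sum_(lo <= i < hi) F i t) s = \sum_(lo <= i < hi) lift (F i) s.
Proof.
by rewrite /bilift; under eq_bigr do rewrite scaler_suml; rewrite exchange_big.
Qed.

Lemma lift0 s : lift (@fzero A R^o) s = 0.
Proof. by rewrite /bilift big1 // => ps _; rewrite scale0r. Qed.

Lemma lift_multilin n (f : seq A -> R^o) : multilin n f -> multilin n (lift f).
Proof.
move=> Hf s t x a b Hn.
apply: (linear_big_combos_at (Psi := fun ps => f (map snd ps) *: firsts_prod ps))
  => p1 p3 H1 H3.
apply: bilinP => [v|u] y c d; rewrite !map_cat !firsts_prod_cat !firsts_prod_cons /=.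
  by rewrite mulrDl mulrDr -scalerAl -scalerAr scalerDr !scalerA mulrC.
by rewrite (multilin_linear Hf) ?size_map ?H1 ?H3 // scalerDl -scalerA.
Qed.

Lemma lift_unit : lift (oe OA) [::] = 1.
Proof. by rewrite /bilift big_combos_nil /firsts_prod big_nil scale1r. Qed.

Lemma mu_multilin : multilin 2 (omu OA).
Proof.
apply: (bilinP (phi := fun u v => eps (u * v) : R^o)) => [v|u] x a b.
  by rewrite mulrDl -scalerAl eps_linear.
by rewrite mulrDr -scalerAr eps_linear.
Qed.

Lemma lift_mu : eqdeg 2 (lift (omu OA)) (omu EndA).
Proof.
case=> [|a [|b [|? ?]]] // _; rewrite /= /bilift big_combos_cons.
rewrite -{2}(counitr a) -{2}(counitr b) mulr_suml; apply: eq_bigr => p _.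
rewrite big_combos_cons mulr_sumr; apply: eq_bigr => q _.
rewrite big_combos_nil /= !firsts_prod_cons /firsts_prod big_nil mulr1 epsM.
by rewrite -scalerAl -scalerAr scalerA mulrC.
Qed.

Lemma eps_lift (f : seq A -> R^o) s : multilin (size s) f -> eps (lift f s) = f s.
Proof.
move=> Hf; rewrite /bilift (lin_sum eps_linear) -(counit_big_combos Hf).
by apply: eq_bigr => ps _; rewrite (linZ eps_linear); apply: mulrC.
Qed.

(* Coassociativity moves the coproduct past the lift. *)
Lemma swe_lift (M : lmodType R) (phi : A -> A -> M) (g : seq A -> R^o) s :
  bilin phi -> multilin (size s) g ->
  swe cop phi (lift g s)
  = \sum_(ps <- combos cop s) phi (firsts_prod ps) (lift g (map snd ps)).
Proof.
move=> Hphi Hg; have Hswe := swe_linear Hphi.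
pose psi (X Y Z : seq A) := g Z *: phi (\prod_(a <- X) a) (\prod_(a <- Y) a).
transitivity (\sum_(ps <- combos cop s) \sum_(qs <- combos cop (map fst ps))
                psi (map fst qs) (map snd qs) (map snd ps)).
  rewrite /bilift (lin_sum Hswe); apply: eq_bigr => ps _.
  rewrite (linZ Hswe) firsts_prodE swe_prod // scaler_sumr.
  by apply: eq_bigr => qs _; rewrite /psi /firsts_prod !big_map.
rewrite coassoc_big_combos.
  apply: eq_bigr => ps _; rewrite /bilift (lin_sum (bilin_linr _ Hphi)).
  by apply: eq_bigr => qs _; rewrite (linZ (bilin_linr _ Hphi)) /psi !firsts_prodE.
split=> [Y Z _ _ | X Z _ _ | X Y _ _]; rewrite /psi.
- apply: (@multilin_comp _ _ _ _ _ (fun a => g Z *: phi a (\prod_(b <- Y) b))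
                         (fun X => \prod_(a <- X) a)).
    exact/linear_scale/bilin_linl.
  exact: multilin_prod.
- apply: (@multilin_comp _ _ _ _ _ (fun a => g Z *: phi (\prod_(b <- X) b) a)
                         (fun Y => \prod_(a <- Y) a)).
    exact/linear_scale/bilin_linr.
  exact: multilin_prod.
- apply: (@multilin_comp _ _ _ _ _ (fun r : R^o => r *: phi (\prod_(a <- X) a) (\prod_(a <- Y) a))
                         g) Hg.
  by move=> x r r'; rewrite scalerDl scalerA.
Qed.

Lemma OA_compE m n i (f g : seq A -> R^o) s :
  multilin m f -> (0 < i <= m)%N -> (size s).+1 = (m + n)%N ->
  ocomp OA m n i f g s = plug i n f (lift g) s.
Proof.
move=> Hf Hi Hs.
by rewrite /= /OA_comp /plug /bilift (lin_sum (multilin_linear Hf (size_plug_context Hi Hs))).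
Qed.

Lemma OA_comp_multilin m n i (f g : seq A -> R^o) :
  multilin m f -> multilin n g -> (0 < i <= m)%N ->
  multilin (m + n).-1 (ocomp OA m n i f g).
Proof.
move=> Hf Hg Hi s t x a b Hs; have Hm := leq_trans (andP Hi).1 (andP Hi).2.
rewrite !OA_compE ?size_cat //=; try lia.
exact: (plug_multilin Hf (lift_multilin Hg)).
Qed.

Lemma lift_plug m n (f g : seq A -> R^o) pre mid post :
  multilin m f -> multilin n g -> (size pre + size post).+1 = m -> size mid = n ->
  lift (ocomp OA m n (size pre).+1 f g) (pre ++ mid ++ post)
  = lift f (pre ++ lift g mid :: post).
Proof.
move=> Hf Hg Hm Hn.
pose phi p1 p3 u v := f (map snd p1 ++ v :: map snd p3) *:
                        (firsts_prod p1 * (u * firsts_prod p3)).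
have Hphi p1 p3 : size p1 = size pre -> size p3 = size post -> bilin (phi p1 p3).
  move=> H1 H3; apply: bilinP => [v|u] x a b; rewrite /phi.
    by rewrite mulrDl mulrDr -scalerAl -scalerAr scalerDr !scalerA mulrC.
  by rewrite (multilin_linear Hf) ?size_map ?H1 ?H3 // scalerDl -scalerA.
transitivity (\sum_(p1 <- combos cop pre) \sum_(p3 <- combos cop post)
   \sum_(p2 <- combos cop mid) phi p1 p3 (firsts_prod p2) (lift g (map snd p2))).
  rewrite [LHS]/bilift big_combos_cat; apply: eq_big_combos => p1 H1.
  rewrite big_combos_cat exchange_big; apply: eq_big_combos => p3 H3.
  apply: eq_big_combos => p2 H2.
  rewrite !map_cat OA_compE ?plugE ?size_map ?H1 ?H2 //.
  - by rewrite /phi !firsts_prod_cat.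
  - by rewrite ltn0Sn /=; lia.
  - by rewrite !size_cat !size_map H1 H2 H3; lia.
symmetry; rewrite {1}/bilift big_combos_cat; apply: eq_big_combos => p1 H1.
rewrite big_combos_cons exchange_big; apply: eq_big_combos => p3 H3.
rewrite -(swe_lift (Hphi _ _ H1 H3)) ?Hn // /swe.
symmetry; apply: eq_bigr => -[u v] _.
by rewrite /phi map_cat firsts_prod_cat firsts_prod_cons.
Qed.

Lemma lift_comp m n i (f g : seq A -> R^o) s :
  multilin m f -> multilin n g -> (0 < i <= m)%N -> (size s).+1 = (m + n)%N ->
  lift (ocomp OA m n i f g) s = ocomp EndA m n i (lift f) (lift g) s.
Proof.
move=> Hf Hg /andP[i_gt0 i_le_m] Hs.
have [pre [r [Hpre Es]]] := @split_seq _ i.-1 s ltac:(lia).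
subst s; rewrite size_cat in Hs.
have [mid [post [Hmid Er]]] := @split_seq _ n r ltac:(lia).
subst r; rewrite size_cat in Hs.
have -> : i = (size pre).+1 by lia.
rewrite lift_plug //; last by lia.
exact/esym/plugE.
Qed.

(** * Cohomology *)

Lemma End_compE m n i (f g : seq A -> A) s : ocomp EndA m n i f g s = plug i n f g s.
Proof. by []. Qed.

Lemma lift_odiff n (h : seq A -> R^o) : multilin n h ->
  eqdeg n.+1 (lift (odiff OA n h)) (odiff EndA n (lift h)).
Proof.
move=> Hh s Hs; have Hmu := mu_multilin; have Eh : eqdeg n (lift h) (lift h) by [].
rewrite /odiff !liftD lift_sgn lift_sum; congr (_ + _ + _).
- by rewrite lift_comp ?Hs //; apply: (plug_eqdeg lift_mu Eh); rewrite ?Hs.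
- apply: eq_big_nat => i /andP[i_gt0 i_le_n]; have Hi : (0 < i <= n)%N by rewrite i_gt0 -ltnS.
  rewrite lift_sgn lift_comp ?Hs ?addn2 //; congr sgn.
  by apply: (plug_eqdeg Eh lift_mu); rewrite ?Hs ?addn2.
- rewrite lift_comp ?Hs //; congr sgn.
  by apply: (plug_eqdeg lift_mu Eh); rewrite ?Hs.
Qed.

Lemma eps_sgn k (a : A) : eps (sgn k a) = sgn k (eps a).
Proof. by rewrite /sgn; case: (odd k); rewrite ?(linN eps_linear). Qed.

Lemma eps_odiff n (h : seq A -> A) s : multilin n h -> size s = n.+1 ->
  eps (odiff EndA n h s) = odiff OA n (fun t => eps (h t)) s.
Proof.
move=> Hh Hs; have Hh' := multilin_comp eps_linear Hh; have Hmu := mu_multilin.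
rewrite /odiff !(linD eps_linear) eps_sgn (lin_sum eps_linear); congr (_ + _ + _).
- rewrite OA_compE ?Hs // End_compE; case: s Hs => [//|a s] [Hs].
  by rewrite -cat1s -[s]cats0 !plugE //= !epsM eps_lift ?cats0 ?Hs.
- apply: eq_big_nat => i /andP[i_gt0 i_le_n]; have Hi : (0 < i <= n)%N by rewrite i_gt0 -ltnS.
  rewrite eps_sgn OA_compE ?Hs ?addn2 //.
  by rewrite /plug lift_mu //; apply: size_takel; rewrite size_drop Hs; lia.
- rewrite OA_compE ?Hs // End_compE; congr sgn.
  have Htake : size (take n s) = n by apply: size_takel; rewrite Hs.
  rewrite -[s](cat_take_drop n) -[take n s ++ _]cat0s !plugE //.
  by rewrite /= !epsM eps_lift // Htake.
Qed.

Lemma coboundary_fsub k (X Y : seq A -> A) :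
  eqdeg k X Y -> coboundary EndA k (fsub X Y).
Proof.
move=> EXY; have E0 : eqdeg k (fsub X Y) (@fzero A A).
  by move=> s Hs; rewrite /fsub EXY // subrr.
case: k E0 {EXY} => [|k] E0 //=.
exists (@fzero A A); split; first by move=> s t x a b _; rewrite /fzero scaler0 addr0.
move=> s Hs; rewrite E0 // /odiff /= /End_comp /fzero.
rewrite big1 ?addr0 => [|i _]; last by rewrite /sgn; case: odd; rewrite ?oppr0.
case: s Hs => [|a s] //= _.
by rewrite take0 /= mulr0 mul0r add0r /sgn; case: odd; rewrite ?oppr0.
Qed.

Lemma lift_cocycle n (f : seq A -> R^o) : cocycle OA n f -> cocycle EndA n (lift f).
Proof.
move=> [Hf Hd]; split; first exact: lift_multilin.
move=> s Hs; rewrite -(lift_odiff Hf Hs) (lift_eqdeg (g := @fzero A R^o)) ?lift0 //.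
by rewrite Hs.
Qed.

Lemma lift_coboundary n (f : seq A -> R^o) :
  multilin n f -> coboundary OA n f -> coboundary EndA n (lift f).
Proof.
case: n => [|n] Hf /=.
  by move=> H0 s Hs; rewrite (lift_eqdeg (g := @fzero A R^o)) ?lift0 // Hs.
move=> [h [Hh Hd]]; exists (lift h); split; first exact: lift_multilin.
by move=> s Hs; rewrite -(lift_odiff Hh Hs); apply: lift_eqdeg; rewrite Hs.
Qed.

Lemma coboundary_of_lift n (f : seq A -> R^o) :
  cocycle OA n f -> coboundary EndA n (lift f) -> coboundary OA n f.
Proof.
case: n => [|n] [Hf _] /=.
  move=> H0 s Hs; rewrite -(eps_lift (f := f) (s := s)) ?Hs // H0 //.
  exact: (lin0 eps_linear).
move=> [h [Hh Hd]]; exists (fun t => eps (h t)); split.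
  exact: multilin_comp eps_linear Hh.
move=> s Hs; rewrite -(eps_lift (f := f) (s := s)) ?Hs // Hd //.
exact: eps_odiff.
Qed.

Lemma lift_cup m n (f g : seq A -> R^o) : multilin m f -> multilin n g ->
  eqdeg (m + n) (lift (ocup OA m n f g)) (ocup EndA m n (lift f) (lift g)).
Proof.
move=> Hf Hg s Hs; have Hmu := mu_multilin; have Eg : eqdeg n (lift g) (lift g) by [].
have Ef : eqdeg m.+1 (lift (ocomp OA 2 m 1 (omu OA) f))
                     (ocomp EndA 2 m 1 (omu EndA) (lift f)).
  move=> t Ht; rewrite lift_comp ?Ht //.
  by apply: (plug_eqdeg lift_mu (fun _ _ => erefl)); rewrite ?Ht.
rewrite /ocup (lift_comp (m := m.+1) (OA_comp_multilin Hmu Hf _) Hg) ?leqnn ?Hs //.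
by apply: (plug_eqdeg Ef Eg); rewrite ?leqnn ?Hs.
Qed.

Lemma lift_bracket m n (f g : seq A -> R^o) : multilin m f -> multilin n g ->
  eqdeg (m + n).-1 (lift (obracket OA m n f g)) (obracket EndA m n (lift f) (lift g)).
Proof.
move=> Hf Hg s Hs.
rewrite /obracket /obarcomp liftB !lift_sgn !lift_sum.
congr (sgn _ _ - sgn _ (sgn _ _)); apply: eq_big_nat => i /andP[i_gt0 i_lt];
  rewrite lift_sgn lift_comp ?i_gt0 -?(ltnS i) //; lia.
Qed.

End Bialgebra.

Theorem theorem4p2 (R : comPzRingType) (A : algType R)
  (cop : A -> seq (A * A)) (eps : A -> R) :
  is_bialgebra cop eps ->
  let O := OA cop eps in
  let E := EndA A in
  let L := bilift cop in
  (forall (n : nat) (f g : seq A -> R^o) (x : R),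
      multilin n f -> multilin n g ->
      multilin n (L f) /\
      eqdeg n (L (fun s => x *: f s + g s)) (fun s => x *: L f s + L g s)) /\
  (forall (n : nat) (f : seq A -> R^o), cocycle O n f -> cocycle E n (L f)) /\
  (forall (n : nat) (f : seq A -> R^o),
      multilin n f -> coboundary O n f -> coboundary E n (L f)) /\
  (forall (n : nat) (f : seq A -> R^o),
      cocycle O n f -> coboundary E n (L f) -> coboundary O n f) /\
  eqdeg 0 (L (oe O)) (oe E) /\
  (forall (m n : nat) (f g : seq A -> R^o),
      cocycle O m f -> cocycle O n g ->
      coboundary E (m + n)
        (fsub (L (ocup O m n f g)) (ocup E m n (L f) (L g)))) /\
  (forall (m n : nat) (f g : seq A -> R^o),
      cocycle O m f -> cocycle O n g ->
      coboundary E (m + n).-1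
        (fsub (L (obracket O m n f g)) (obracket E m n (L f) (L g)))).
Proof.
move=> Hbi O E L; rewrite {}/O {}/E {}/L.
split; [|split; [|split; [|split; [|split; [|split]]]]].
- move=> n f g x Hf Hg; split; first exact: (lift_multilin Hbi).
  by move=> s _; apply: liftP.
- exact: (lift_cocycle Hbi).
- exact: (lift_coboundary Hbi).
- exact: (coboundary_of_lift Hbi).
- by move=> s /size0nil ->; apply: lift_unit.
- by move=> m n f g [Hf _] [Hg _]; apply/coboundary_fsub/(lift_cup Hbi).
- by move=> m n f g [Hf _] [Hg _]; apply/coboundary_fsub/(lift_bracket Hbi).
Qed.
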